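(* Let $v=s_{\mathbf i}s_{\mathbf j}^*\in\mathrm{Cu}_2\setminus\{\lozenge\}$ and let $f\in\mathcal A$ have zero sums at $v$, i.e. $\sum_{l=0}^\infty f(s_{\mathbf i\mathbf n_l}s_{\mathbf j\mathbf n_l}^* )=0$ for every $\mathbf n\in\mathbf L$. Then $h:=\sum_{t\in S_v}f(t)\delta_t$ belongs to $\mathcal J$.
   Context: Let $\mathrm{Cu}_2$ be the involutive monoid with identity $e$ and zero element $\lozenge$ (so $\lozenge t=\lozenge=t\lozenge$ for all $t$), generated by $s_1,s_2,s_1^*,s_2^*$ subject to $s_1^*s_1=e=s_2^*s_2$ and $s_1^*s_2=\lozenge=s_2^*s_1$, with involution $t\mapsto t^*$ satisfying $(t^* )^*=t$, $(tu)^*=u^*t^*$. Let $\mathbf I_0=\{\emptyset\}$, $\mathbf I_n=\{1,2\}^n$, $\mathbf I=\bigcup_{n\ge0}\mathbf I_n$ (finite words; concatenation written $\mathbf{ij}$), and $\mathbf L=\{1,2\}^{\mathbb N}$; for $\mathbf n=(n_1,n_2,\dots)\in\mathbf L$ put $\mathbf n_0=\emptyset$, $\mathbf n_l=(n_1,\dots,n_l)$. For $\mathbf i=(i_1,\dots,i_k)\in\mathbf I$ put $s_{\mathbf i}=s_{i_1}\cdots s_{i_k}$ ($s_\emptyset=e$) and $s_{\mathbf i}^*=(s_{\mathbf i})^*$. Every $t\in\mathrm{Cu}_2\setminus\{\lozenge\}$ can be written uniquely as $t=s_{\mathbf i}s_{\mathbf j}^*$ with $\mathbf i,\mathbf j\in\mathbf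 I$. Let $\mathcal A=\ell^1(\mathrm{Cu}_2\setminus\{\lozenge\})$ with product $\#$ determined by bilinearity and continuity from $\delta_s\#\delta_t=\delta_{st}$ if $st\neq\lozenge$ and $\delta_s\#\delta_t=0$ if $st=\lozenge$; this is a unital Banach $*$-algebra with unit $\delta_e$ and isometric involution $f^*(s)=\overline{f(s^* )}$. Let $f_0=\delta_e-\delta_{s_1s_1^*}-\delta_{s_2s_2^*}$ and let $\mathcal J$ be the closed two-sided ideal of $\mathcal A$ generated by $f_0$. For $v=s_{\mathbf i}s_{\mathbf j}^*$, $S_v=\{s_{\mathbf{ik}}s_{\mathbf{jk}}^*:\mathbf k\in\mathbf I\}$ is the set of symmetric expansions of $v$. *)

From HB Require Import structures.
From mathcomp Require Import all_boot all_order all_algebra.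
From mathcomp Require Import finmap.
From mathcomp Require Import complex.
From mathcomp Require Import all_classical all_reals all_analysis.

Set Implicit Arguments.
Unset Strict Implicit.
Unset Printing Implicit Defensive.

Import Order.TTheory GRing.Theory Num.Theory.
Import numFieldTopology.Exports numFieldNormedType.Exports.

Local Open Scope classical_set_scope.
Local Open Scope ring_scope.

(* Letters {1,2} are encoded by bool: false = 1, true = 2.                    *)
(* A finite word i in I is a [seq bool]; an infinite word n in L is a          *)
(* function nat -> bool (n_1, n_2, ... = n 0, n 1, ...).                       *)
(* An element s_i s_j^* of Cu_2 \ {zero} is represented by the pair (i, j)   *)
(* (unique normal form, as stated in the paper).                              *)

Definition word := seq bool.
Definition elt := (word * word)%type.

Definition cu_e : elt := ([::], [::]).

(* product in Cu_2: (s_i s_j^* ) (s_k s_l^* ); None encodes the zero element. *)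
Definition cu_mul (a b : elt) : option elt :=
  let: (i, j) := a in let: (k, l) := b in
  if prefix j k then Some (i ++ drop (size j) k, l)
  else if prefix k j then Some (i, l ++ drop (size k) j)
  else None.

Definition trunc (n : nat -> bool) (l : nat) : word := mkseq n l.

Section Algebra.
Variable R : realType.
Local Notation C := R[i].

Definition cabs (z : C) : R := Normc.normc z.

Definition l1norm (f : elt -> C) : \bar R :=
  (\esum_(t in [set: elt]) (cabs (f t))%:E)%E.

(* membership in A = l^1(Cu_2 \ {zero}) *)
Definition inA (f : elt -> C) : Prop := (l1norm f < +oo)%E.

Definition delta (s : elt) : elt -> C := fun t => if t == s then 1 else 0.

(* unordered sums of families indexed by a choiceType: limit of the        *)
(* finite partial sums along the net of finite subsets                       *)
Definition totally {I : choiceType} : set_system {fset I} :=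
  filter_from setT (fun A => [set B | (A `<=` B)%fset]).

Definition partial_sum {I : choiceType} (x : I -> C) (A : {fset I}) : C :=
  \sum_(i : A) x (val i).

Definition usum {I : choiceType} (x : I -> C) : C :=
  lim ((fun A => (partial_sum x A : (R[i])^o)) @ totally).

Definition conv (f g : elt -> C) : elt -> C := fun u =>
  usum (fun p : elt * elt => if cu_mul p.1 p.2 == Some u then f p.1 * g p.2 else 0).

Definition f0 : elt -> C :=
  fun t => delta cu_e t - delta ([:: false], [:: false]) t
                        - delta ([:: true], [:: true]) t.

Definition subspaceA (I : set (elt -> C)) : Prop :=
  [/\ (forall g, I g -> inA g),
      I (fun _ => 0),
      (forall g h, I g -> I h -> I (fun t => g t + h t)) &
      (forall (c : C) g, I g -> I (fun t => c * g t))].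

Definition closedA (I : set (elt -> C)) : Prop :=
  forall g, inA g ->
    (forall e : R, 0 < e ->
       exists2 h, I h & (l1norm (fun t => (g t - h t)%R) < e%:E)%E) ->
    I g.

Definition closed_ideal (I : set (elt -> C)) : Prop :=
  [/\ subspaceA I,
      (forall a g, inA a -> I g -> I (conv a g)),
      (forall a g, inA a -> I g -> I (conv g a)) &
      closedA I].

Definition J : set (elt -> C) :=
  fun g => forall I, closed_ideal I -> I f0 -> I g.

Definition zero_sums_at (i j : word) (f : elt -> C) : Prop :=
  forall n : nat -> bool,
    series (fun l => (f (i ++ trunc n l, j ++ trunc n l) : (R[i])^o)) @ \oo --> (0 : (R[i])^o).

Definition restrict_Sv (i j : word) (f : elt -> C) : elt -> C := fun u =>
  if `[< exists k : word, u = (i ++ k, j ++ k) >] then f u else 0.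

End Algebra.

From Pilot Require Import Defs.
From HB Require Import structures.
From mathcomp Require Import all_boot all_order all_algebra.
From mathcomp Require Import finmap.
From mathcomp Require Import complex.
From mathcomp Require Import all_classical all_reals all_analysis.
From mathcomp Require Import ring zify lra.

(* Write delta(t) for the Dirac mass at t, put F(m) = f(s_im s_jm^* ) for
   finite words m, and let c(m) be the sum of F over the prefixes of m.
   For every word k the element
     g_k = delta(s_ik s_jk^* ) - delta(s_ik1 s_jk1^* ) - delta(s_ik2 s_jk2^* )
   equals delta(s_ik) # f_0 # delta(s_jk^* ), so g_k lies in every closed ideal
   containing f_0, and so does H_N = sum_{|k| < N} c(k) g_k.  A telescoping
   computation shows that h - H_N is supported on S_v, vanishes on the words
   of length < N, equals c(m) on the words m of length N and F(m) on longer
   words.  Given eps > 0, choose N such that the words longer than N carry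
   l^1-mass at most eps; for |m| = N the zero sum of F along the ray m111...
   bounds |c(m)| by a small number plus F-masses of distinct longer words.
   Hence ||h - H_N|| <= 3 eps, and h lies in J because J is closed. *)

Set Implicit Arguments.
Unset Strict Implicit.
Unset Printing Implicit Defensive.
Import Order.TTheory GRing.Theory Num.Theory.
Import numFieldTopology.Exports numFieldNormedType.Exports.
Local Open Scope classical_set_scope.
Local Open Scope complex_scope.
Local Open Scope ring_scope.

Lemma totally_proper (I : choiceType) : ProperFilter (@totally I).
Proof.
apply: filter_from_proper; last by move=> A _; exists A => /=; exact: fsubset_refl.
apply: filter_from_filter; first by exists fset0.
move=> A B _ _; exists (A `|` B)%fset => // D /= AB_D; split.
  by apply: fsubset_trans AB_D; apply: fsubsetUl.
by apply: fsubset_trans AB_D; apply: fsubsetUr.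
Qed.

Lemma sum_support (T : eqType) (V : nmodType) (x : T -> V) (s r : seq T) :
  uniq s -> uniq r -> {subset s <= r} -> (forall y, y \notin s -> x y = 0) ->
  \sum_(y <- r) x y = \sum_(y <- s) x y.
Proof.
move=> us ur sr xs.
rewrite (bigID (fun y => y \in s)) /= [X in _ + X]big1 ?addr0; last by move=> y /xs.
rewrite -big_filter -[RHS]big_filter; apply: perm_big.
apply: uniq_perm; rewrite ?filter_uniq // => y; rewrite !mem_filter.
by case s_y: (y \in s) => //=; rewrite sr.
Qed.

Lemma sum_subset_le (T : eqType) (R : numDomainType) (r r' : seq T) (F : T -> R) :
  uniq r -> uniq r' -> {subset r <= r'} -> (forall x, 0 <= F x) ->
  \sum_(x <- r) F x <= \sum_(x <- r') F x.
Proof.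
move=> ur ur' sr F0; rewrite [X in _ <= X](bigID (fun x => x \in r)) /=.
rewrite -[X in X + _]big_filter.
have -> : \sum_(x <- [seq x <- r' | x \in r]) F x = \sum_(x <- r) F x.
  apply: perm_big; apply: uniq_perm; rewrite ?filter_uniq // => y.
  by rewrite mem_filter; case r_y: (y \in r) => //=; exact: sr.
by rewrite lerDl sumr_ge0.
Qed.

(* Coordinates on S_v: the word m codes s_im s_jm^*, and [sv_coord] decodes. *)
Definition sv_elt (i j m : word) : elt := (i ++ m, j ++ m).

Definition sv_coord (i j : word) (u : elt) : option word :=
  if [&& prefix i u.1, prefix j u.2 & drop (size i) u.1 == drop (size j) u.2]
  then Some (drop (size i) u.1) else None.

Lemma sv_elt_inj i j : injective (sv_elt i j).
Proof. by move=> m1 m2 [] /eqP; rewrite eqseq_cat // eqxx => /eqP. Qed.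

Lemma sv_coordK i j : pcancel (sv_elt i j) (sv_coord i j).
Proof. by move=> m; rewrite /sv_coord /= !prefix_prefix !drop_size_cat // eqxx. Qed.

Lemma sv_coord_Some i j u m : sv_coord i j u = Some m -> u = sv_elt i j m.
Proof.
rewrite /sv_coord; case: u => a b /=.
case: prefixP => [[a' ->]|] //=; case: prefixP => [[b' ->]|] //=.
by rewrite !drop_size_cat //; case: eqP => // -> [<-].
Qed.

Lemma sv_coord_None i j u : sv_coord i j u = None -> forall m, u <> sv_elt i j m.
Proof. by move=> coord_u m u_m; rewrite u_m sv_coordK in coord_u. Qed.

Lemma sv_eltK i j : ocancel (sv_coord i j) (sv_elt i j).
Proof. by move=> u; case coord_u: (sv_coord i j u) => [m|] //=; rewrite (sv_coord_Some coord_u). Qed.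

Fixpoint words (n : nat) : seq word :=
  if n is n'.+1 then [seq false :: w | w <- words n'] ++ [seq true :: w | w <- words n']
  else [:: [::]].

Lemma mem_words n m : (m \in words n) = (size m == n).
Proof.
have cons_inj b : injective (@cons bool b) by move=> x y [].
elim: n m => [|n IH] [|b m] //=; rewrite mem_cat.
  by apply/orP => -[] /mapP [].
rewrite eqSS -IH; case: b.
  by rewrite (mem_map (cons_inj true)); case: mapP => // -[].
by rewrite (mem_map (cons_inj false)); case: mapP => [[]|]; rewrite ?orbF.
Qed.

Lemma uniq_words n : uniq (words n).
Proof.
have cons_inj b : injective (@cons bool b) by move=> x y [].
elim: n => //= n IH; rewrite cat_uniq !map_inj_uniq //= IH /= andbT.
by apply/hasP => -[x /mapP [y _ ->] /mapP [z _]].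
Qed.

(* Truncations of the ray m111... : its prefixes of length k. *)
Lemma trunc_ray_le m k : (k <= size m)%N -> trunc (nth false m) k = take k m.
Proof. by move=> k_m; rewrite /trunc /mkseq map_nth_iota0. Qed.

Lemma trunc_ray_ge m k : (size m <= k)%N ->
  trunc (nth false m) k = m ++ nseq (k - size m) false.
Proof.
move=> m_k; rewrite /trunc /mkseq -(subnKC m_k) iotaD map_cat map_nth_iota0 // take_size.
congr (_ ++ _); rewrite subnKC // add0n.
have : all (fun x => size m <= x)%N (iota (size m) (k - size m)).
  by apply/allP => x; rewrite mem_iota => /andP [].
rewrite -{3}(size_iota (size m) (k - size m)).
elim: (iota _ _) => [|a s IH] //= /andP [m_a /IH ->].
by rewrite nth_default.
Qed.

Lemma eventually_all (T : eqType) (P : T -> nat -> Prop) (s : seq T) :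
  (forall m, exists L0, forall L, (L0 <= L)%N -> P m L) ->
  exists L0, forall L, (L0 <= L)%N -> forall m, m \in s -> P m L.
Proof.
move=> evP; elim: s => [|a s [L1 HL1]]; first by exists 0%N.
have [L2 HL2] := evP a; exists (maxn L1 L2) => L; rewrite geq_max => /andP [h1 h2] m.
by rewrite inE => /orP [/eqP ->|ms]; [exact: HL2 | exact: HL1].
Qed.

Lemma ray_extensions_uniq N L :
  uniq [seq m ++ nseq (k - N) false | m <- words N, k <- index_iota N.+1 L].
Proof.
apply: allpairs_uniq; rewrite ?uniq_words ?iota_uniq //.
move=> [m1 k1] [m2 k2] /allpairsP [[a1 b1] /= [a1N b1I [-> ->]]].
move=> /allpairsP [[a2 b2] /= [a2N b2I [-> ->]]] /= /eqP.
move: a1N a2N; rewrite !mem_words => /eqP s1 /eqP s2.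
rewrite eqseq_cat ?s1 ?s2 // => /andP [/eqP -> /eqP /(congr1 size)].
move: b1I b2I; rewrite !size_nseq !mem_index_iota => /andP [h1 _] /andP [h2 _] h.
by congr (_, _); lia.
Qed.

Lemma ray_extensions_long N L w :
  w \in [seq m ++ nseq (k - N) false | m <- words N, k <- index_iota N.+1 L] ->
  (N < size w)%N.
Proof.
move=> /allpairsP [[a b] /= [aN bI ->]].
move: aN bI; rewrite mem_words mem_index_iota => /eqP sa /andP [h _].
by rewrite size_cat size_nseq sa; lia.
Qed.

Lemma sum_indicator (T : eqType) (V : pzSemiRingType) (r : seq T) (G : T -> V) x : uniq r ->
  \sum_(k <- r) G k * (if x == k then 1 else 0) = if x \in r then G x else 0.
Proof.
elim: r => [|a r IH] /=; first by rewrite big_nil.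
move=> /andP [a_r ur]; rewrite big_cons IH // inE.
case: eqP => [->|_] /=; last by rewrite mulr0 add0r.
by rewrite (negbTE a_r) mulr1 addr0.
Qed.

Section CuntzAlgebra.
Variable R : realType.
Local Notation C := R[i].

Lemma usum_finite (T : choiceType) (x : T -> C) (s : seq T) :
  uniq s -> (forall y, y \notin s -> x y = 0) -> usum x = \sum_(y <- s) x y.
Proof.
move=> us xs; have PF := @totally_proper T.
apply: (@norm_cvg_lim _ _ _ _ (\sum_(y <- s) x y : C^o)).
apply: cvg_trans (cvg_cst (\sum_(y <- s) x y : C^o)).
apply: near_eq_cvg; exists [fset y | y in s]%fset => // A /= sA.
rewrite /partial_sum -(big_seq_fsetE _ A xpredT x) /=.
  symmetry; apply: sum_support => //.
  by move=> y ys; apply: (fsubsetP sA); rewrite inE /= ys.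
by case: PF.
Qed.

Lemma conv_deltaL (a : elt) (b : elt -> C) (s : seq elt) u :
  uniq s -> (forall y, y \notin s -> b y = 0) ->
  Defs.conv (delta R a) b u = \sum_(q <- s) (if cu_mul a q == Some u then b q else 0).
Proof.
move=> us bs; rewrite /Defs.conv (@usum_finite _ _ [seq (a, q) | q <- s]).
- by rewrite big_map; apply: eq_bigr => q _ /=; rewrite /delta eqxx mul1r.
- by rewrite map_inj_uniq // => q1 q2 [].
move=> [p q] /=; rewrite /delta.
case: (eqVneq p a) => [->|_]; last by rewrite mul0r; case: ifP.
move=> aq_notin; rewrite bs ?mulr0; first by case: ifP.
by apply: contra aq_notin => qs; apply/mapP; exists q.
Qed.

Lemma conv_deltaR (a : elt) (b : elt -> C) (s : seq elt) u :
  uniq s -> (forall y, y \notin s -> b y = 0) ->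
  Defs.conv b (delta R a) u = \sum_(p <- s) (if cu_mul p a == Some u then b p else 0).
Proof.
move=> us bs; rewrite /Defs.conv (@usum_finite _ _ [seq (p, a) | p <- s]).
- by rewrite big_map; apply: eq_bigr => p _ /=; rewrite /delta eqxx mulr1.
- by rewrite map_inj_uniq // => p1 p2 [].
move=> [p q] /=; rewrite /delta.
case: (eqVneq q a) => [->|_]; last by rewrite mulr0; case: ifP.
move=> pa_notin; rewrite bs ?mul0r; first by case: ifP.
by apply: contra pa_notin => ps; apply/mapP; exists p.
Qed.

Lemma Some_eq (x y : elt) : (Some x == Some y) = (x == y).
Proof. by apply/eqP/eqP => [[]|->]. Qed.

Lemma cat1_neq (s : word) b : (s ++ [:: b] == s) = false.
Proof. by apply/eqP => /(congr1 size); rewrite size_cat /= addn1; lia. Qed.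

Lemma cat1_eq (s : word) a b : (s ++ [:: a] == s ++ [:: b]) = (a == b).
Proof. by rewrite eqseq_cat // eqxx /=; case: a; case: b. Qed.

Lemma f0_conv_delta (q : word) u :
  Defs.conv (f0 R) (delta R ([::], q)) u =
  delta R ([::], q) u - delta R ([:: false], q ++ [:: false]) u
     - delta R ([:: true], q ++ [:: true]) u.
Proof.
rewrite (@conv_deltaR _ _ [:: cu_e; ([:: false], [:: false]); ([:: true], [:: true])]) //.
- rewrite !big_cons big_nil /= /f0 /delta /cu_e /= !Some_eq !(eq_sym u).
  case: eqP => [eq_u|_]; try subst u; rewrite ?xpair_eqE /=; first ring.
  case: eqP => [eq_u|_]; try subst u; rewrite ?xpair_eqE /=; first ring.
  by case: eqP => [eq_u|_]; try subst u; rewrite ?xpair_eqE /=; ring.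
move=> y; rewrite !inE /f0 /delta => /norP [/negbTE -> /norP [/negbTE -> /negbTE ->]].
by rewrite subrr subr0.
Qed.

Lemma generator_eq (p q : word) :
  Defs.conv (delta R (p, [::])) (Defs.conv (f0 R) (delta R ([::], q))) =
  fun u => delta R (p, q) u - delta R (p ++ [:: false], q ++ [:: false]) u
     - delta R (p ++ [:: true], q ++ [:: true]) u.
Proof.
apply/funext => u.
rewrite (@conv_deltaL _ _ [:: ([::], q); ([:: false], q ++ [:: false]); ([:: true], q ++ [:: true])]) //.
- rewrite !big_cons big_nil /= !f0_conv_delta /delta !xpair_eqE /= !eqxx /= cats0.
  rewrite !Some_eq !(eq_sym u).
  case: eqP => [eq_u|_]; try subst u; rewrite ?xpair_eqE /= ?cat1_neq ?cat1_eq /=; first ring.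
  case: eqP => [eq_u|_]; try subst u; rewrite ?xpair_eqE /= ?cat1_neq ?cat1_eq /=; first ring.
  by case: eqP => [eq_u|_]; try subst u; rewrite ?xpair_eqE /= ?cat1_neq ?cat1_eq /=; ring.
move=> y; rewrite !inE f0_conv_delta /delta.
move=> /norP [/negbTE -> /norP [/negbTE -> /negbTE ->]].
by rewrite subrr subr0.
Qed.

Lemma cabsE (x : C) : cabs x = complex.Re `|x|.
Proof. by case: x. Qed.

Lemma normE (x : C) : `|x| = (cabs x)%:C.
Proof. by case: x. Qed.

Lemma cabs_ge0 (x : C) : 0 <= cabs x.
Proof. by have := normr_ge0 x; rewrite lecE cabsE => /andP []. Qed.

Lemma cabs0 : cabs (0 : C) = 0.
Proof. by rewrite cabsE normr0. Qed.

Lemma cabs_subr_le (x y : C) : cabs (x - y) <= cabs x + cabs y.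
Proof. by have := ler_normB x y; rewrite !normE -rmorphD lecR. Qed.

Lemma cabs_sum (T : Type) (r : seq T) (G : T -> C) :
  cabs (\sum_(k <- r) G k) <= \sum_(k <- r) cabs (G k).
Proof.
have := ler_norm_sum r G xpredT; rewrite normE.
have -> : \sum_(k <- r) `|G k| = (\sum_(k <- r) cabs (G k))%:C.
  by rewrite rmorph_sum; apply: eq_bigr => k _; rewrite normE.
by rewrite lecR.
Qed.

Lemma inA_delta s : inA (delta R s).
Proof.
rewrite /inA /l1norm (eq_esum (b := fun t => if t \in [set s] then 1%:E else 0%:E)).
  by rewrite -esum_mkcond esum_set1 // ltry.
by move=> t _; rewrite /delta in_set1 cabsE; case: (t == s); rewrite ?normr1 ?normr0.
Qed.

Section Approximants.
Variables (i j : word) (f : elt -> C).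

Definition fS (m : word) : C := f (sv_elt i j m).

(* c(m): the sum of F over the prefixes of m, i.e. a partial sum along any
   infinite word extending m. *)
Definition prefix_sum (m : word) : C := \sum_(k < (size m).+1) fS (take k m).

Definition gen (k : word) : elt -> C := fun u =>
  delta R (sv_elt i j k) u - delta R (sv_elt i j (k ++ [:: false])) u
  - delta R (sv_elt i j (k ++ [:: true])) u.

Fixpoint approx (N : nat) : elt -> C :=
  if N is N'.+1 then fun u => approx N' u + \sum_(k <- words N') prefix_sum k * gen k u
  else fun _ => 0.

(* E_N, which turns out to equal h - H_N: in coordinates it is 0 below
   length N, c on length N and F beyond. *)
Definition error_on_words (N : nat) (m : word) : C :=
  if (size m < N)%N then 0 else if size m == N then prefix_sum m else fS m.

Definition approx_error (N : nat) (u : elt) : C :=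
  if sv_coord i j u is Some m then error_on_words N m else 0.

Lemma restrict_SvE u :
  restrict_Sv i j f u = if sv_coord i j u is Some m then fS m else 0.
Proof.
rewrite /restrict_Sv; case coord_u: (sv_coord i j u) => [m|].
  by rewrite (sv_coord_Some coord_u) asboolT //; exists m.
by rewrite asboolF // => -[k]; exact: sv_coord_None.
Qed.

Lemma gen_sv_elt k m :
  gen k (sv_elt i j m) = (if m == k then 1 else 0) -
     ((if m == k ++ [:: false] then 1 else 0) + (if m == k ++ [:: true] then 1 else 0)).
Proof. by rewrite /gen /delta !(inj_eq (@sv_elt_inj i j)) opprD addrA. Qed.

Lemma child_indicator (m k : word) N : size k = N ->
  (if m == k ++ [:: false] then 1 else 0) + (if m == k ++ [:: true] then 1 else 0)
  = (if (size m == N.+1) && (take N m == k) then 1 else 0 : C).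
Proof.
move=> sk; case: (lastP m) => [|m' x].
  by case: (k) => [|? ?]; rewrite /= ?addr0.
rewrite -!cats1 size_cat addn1 eqSS.
case: (eqVneq (size m') N) => [sm|sn] /=.
  rewrite !eqseq_cat ?sm ?sk // take_size_cat //.
  by case: eqP => _ /=; [case: x|]; rewrite /= ?addr0 ?add0r.
have neq b : (m' ++ [:: x] == k ++ [:: b]) = false.
  apply/eqP => /(congr1 size); rewrite !size_cat sk /= !addn1 => -[] /eqP.
  by rewrite (negbTE sn).
by rewrite !neq addr0.
Qed.

Lemma level_sum_sv_elt m N :
  \sum_(k <- words N) prefix_sum k * gen k (sv_elt i j m) =
  (if size m == N then prefix_sum m else 0) -
  (if size m == N.+1 then prefix_sum (take N m) else 0).
Proof.
under eq_bigr => k _ do rewrite gen_sv_elt mulrBr.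
rewrite sumrB sum_indicator ?uniq_words // mem_words; congr (_ - _).
rewrite big_seq; case: (eqVneq (size m) N.+1) => [sm|sn]; last first.
  by rewrite big1 // => k; rewrite mem_words => /eqP /child_indicator ->; rewrite (negbTE sn) mulr0.
rewrite (eq_bigr (fun k => prefix_sum k * (if take N m == k then 1 else 0))).
  by rewrite -big_seq sum_indicator ?uniq_words // mem_words size_takel ?sm // eqxx.
by move=> k; rewrite mem_words => /eqP /child_indicator ->; rewrite sm eqxx.
Qed.

Lemma prefix_sum_last m N : size m = N.+1 ->
  prefix_sum m = prefix_sum (take N m) + fS m.
Proof.
move=> sm; rewrite /prefix_sum sm big_ord_recr /= size_takel ?sm // take_oversize ?sm //.
congr (_ + _); apply: eq_bigr => k _; rewrite take_takel //.
by have := ltn_ord k; rewrite ltnS.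
Qed.

Lemma approx_off_Sv N u : sv_coord i j u = None -> approx N u = 0.
Proof.
move=> coord_u; elim: N => //= N ->; rewrite add0r big1 // => k _.
have delta0 x : delta R (sv_elt i j x) u = 0.
  by rewrite /delta; case: eqP => // /(sv_coord_None coord_u).
by rewrite /gen !delta0 !subr0 mulr0.
Qed.

Lemma restrict_sub_approx N u : restrict_Sv i j f u - approx N u = approx_error N u.
Proof.
rewrite restrict_SvE /approx_error; case coord_u: (sv_coord i j u) => [m|]; last first.
  by rewrite approx_off_Sv // subr0.
rewrite (sv_coord_Some coord_u) /error_on_words; elim: N => [|N IH] /=.
  rewrite subr0; case: eqP => // /size0nil ->.
  by rewrite /prefix_sum /= big_ord_recl big_ord0 addr0.
rewrite level_sum_sv_elt opprD addrA IH.
case: (ltngtP (size m) N) => m_N.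
- have [m_lt m_neq] : (size m < N.+1)%N /\ size m != N.+1 by split; lia.
  by rewrite m_lt (negbTE m_neq) !subr0.
- have -> : (size m < N.+1)%N = false by lia.
  case: (eqVneq (size m) N.+1) => [sm|sn]; last by rewrite !subr0.
  by rewrite (prefix_sum_last sm) sub0r opprK addrC.
- by rewrite m_N ltnSn (ltn_eqF (ltnSn N)) subr0; exact: subrr.
Qed.

Section InClosedIdeal.
Variables (I : set (elt -> C)) (I_ideal : closed_ideal I) (I_f0 : I (f0 R)).

(* g_k = delta(s_ik) # f_0 # delta(s_jk^* ) lies in I. *)
Lemma gen_in_ideal k : I (gen k).
Proof.
have [_ IL IR _] := I_ideal.
have -> : gen k = Defs.conv (delta R (i ++ k, [::]))
                    (Defs.conv (f0 R) (delta R ([::], j ++ k))).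
  by rewrite generator_eq /gen /sv_elt -!catA.
by apply: IL; [exact: inA_delta | apply: IR => //; exact: inA_delta].
Qed.

Lemma approx_in_ideal N : I (approx N).
Proof.
have [[_ I0 Iadd Iscale] _ _ _] := I_ideal.
have Ilevel (s : seq word) : I (fun u => \sum_(k <- s) prefix_sum k * gen k u).
  elim: s => [|k s IH].
    by rewrite (_ : (fun _ => _) = (fun _ => 0)) //; apply/funext => u; rewrite big_nil.
  rewrite (_ : (fun _ => _) = (fun u => prefix_sum k * gen k u +
                  \sum_(k <- s) prefix_sum k * gen k u)).
    by apply: Iadd => //; apply: Iscale; exact: gen_in_ideal.
  by apply/funext => u; rewrite big_cons.
by elim: N => //= N IH; apply: Iadd.
Qed.

End InClosedIdeal.

End Approximants.

Section Estimates.
Variables (i j : word) (f : elt -> C).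
Local Notation F := (fS i j f).
Local Notation c := (prefix_sum i j f).

Definition sv_mass : \bar R := (\esum_(m in [set: word]) (cabs (F m))%:E)%E.

Lemma sum_fS_le_l1norm (s : seq word) : uniq s ->
  ((\sum_(m <- s) cabs (F m))%:E <= l1norm f)%E.
Proof.
move=> us; apply: esum_ge; exists [set` map (sv_elt i j) s].
  by split; [exact: finite_seq|].
rewrite -fsbig_seq ?map_inj_uniq //; last exact: sv_elt_inj.
by rewrite big_map sumEFin.
Qed.

Lemma sv_mass_le : (sv_mass <= l1norm f)%E.
Proof.
apply: ge_ereal_sup => _ [X [finX _] <-].
by rewrite fsbig_finite // sumEFin; apply: sum_fS_le_l1norm; exact: fset_uniq.
Qed.

Lemma inA_restrict_Sv : inA f -> inA (restrict_Sv i j f).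
Proof.
rewrite /inA => fA; apply: le_lt_trans fA; apply: le_esum => u _.
rewrite lee_fin restrict_SvE; case coord_u: (sv_coord i j u) => [m|].
  by rewrite /fS -(sv_coord_Some coord_u).
by rewrite cabs0 cabs_ge0.
Qed.

Definition small_tail (N : nat) (eps : R) : Prop :=
  forall s, uniq s -> (forall m, m \in s -> (N < size m)%N) ->
    \sum_(m <- s) cabs (F m) <= eps.

Lemma exists_small_tail (eps : R) : inA f -> 0 < eps -> exists N, small_tail N eps.
Proof.
move=> fA eps0.
have mass0 : (0 <= sv_mass)%E by apply: esum_ge0 => m _; rewrite lee_fin cabs_ge0.
have mass_fin : sv_mass \is a fin_num.
  by rewrite ge0_fin_numE // (le_lt_trans sv_mass_le).
set r := fine sv_mass.
have : ((r - eps)%:E < sv_mass)%E by rewrite -[X in (_ < X)%E](fineK mass_fin) lte_fin -/r; lra.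
move=> /ereal_sup_gt [_ [X [finX _] <-]].
rewrite fsbig_finite // sumEFin lte_fin; set A : seq word := fset_set X => A_big.
exists (\max_(m <- A) size m)%N => s us s_long.
have uA : uniq A by exact: fset_uniq.
have : ((\sum_(m <- s ++ A) cabs (F m))%:E <= sv_mass)%E.
  apply: esum_ge; exists [set` (s ++ A)]; first by split; [exact: finite_seq|].
  rewrite -fsbig_seq ?sumEFin // cat_uniq us uA andbT /=.
  apply/hasP => -[m mA ms]; have := s_long m ms.
  by rewrite ltnNge (@leq_bigmax_seq _ A xpredT (fun m : word => size m) m mA isT).
by rewrite -(fineK mass_fin) lee_fin big_cat /= -/r => ?; lra.
Qed.

Lemma sum_approx_error (N : nat) (s : seq elt) :
  \sum_(t <- s) cabs (approx_error i j f N t) =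
  \sum_(m <- pmap (sv_coord i j) s) cabs (error_on_words i j f N m).
Proof.
elim: s => [|t s IH]; first by rewrite !big_nil.
rewrite big_cons IH /approx_error /=; case: (sv_coord i j t) => [m|].
  by rewrite /= big_cons.
by rewrite cabs0 add0r.
Qed.

Lemma l1norm_approx_error_le N (eps B : R) : small_tail N eps ->
  \sum_(m <- words N) cabs (c m) <= B ->
  (l1norm (approx_error i j f N) <= (B + eps)%:E)%E.
Proof.
move=> tail level; apply: ge_ereal_sup => _ [X [finX _] <-].
rewrite fsbig_finite // sumEFin lee_fin sum_approx_error.
have us : uniq (pmap (sv_coord i j) (fset_set X)).
  by apply: (pmap_uniq (@sv_eltK i j)); exact: fset_uniq.
set s := pmap _ _ in us *.
apply: (@le_trans _ _ (\sum_(m <- s) ((if size m == N then cabs (c m) else 0)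
     + (if (N < size m)%N then cabs (F m) else 0)))).
  apply: ler_sum => m _; rewrite /error_on_words.
  by case: (ltngtP (size m) N) => _; rewrite ?cabs0 ?addr0 ?add0r.
rewrite big_split -!big_mkcond -[X in X + _ <= _]big_filter -[X in _ + X <= _]big_filter.
apply: lerD.
  apply: le_trans level; apply: sum_subset_le; rewrite ?filter_uniq ?uniq_words //.
    by move=> m; rewrite mem_filter mem_words => /andP [].
  by move=> m; apply: cabs_ge0.
by apply: tail; rewrite ?filter_uniq // => m; rewrite mem_filter => /andP [].
Qed.

Lemma ray_partial_sums_small (d : R) : zero_sums_at i j f -> 0 < d ->
  forall m, exists L0, forall L, (L0 <= L)%N ->
  cabs (series (fun l => F (trunc (nth false m) l)) L) < d.
Proof.
move=> zs d0 m; have := zs (nth false m).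
move/cvgr0_norm_lt => /(_ (d%:C)); rewrite ltcR => /(_ d0) [L0 _ HL0].
by exists L0 => L /HL0; rewrite normE ltcR.
Qed.

Lemma prefix_sum_ray m L : (size m < L)%N ->
  c m = series (fun l => F (trunc (nth false m) l)) L -
    \sum_((size m).+1 <= k < L) F (m ++ nseq (k - size m) false).
Proof.
move=> m_L; rewrite /series /= (big_cat_nat _ (n := (size m).+1)) //=.
rewrite [X in _ + X - _](eq_big_nat _ _ (F2 := fun k => F (m ++ nseq (k - size m) false))); last first.
  by move=> k /andP [m_k _]; rewrite trunc_ray_ge // ltnW.
rewrite addrK big_mkord /prefix_sum; apply: eq_bigr => k _; rewrite trunc_ray_le //.
by have := ltn_ord k; rewrite ltnS.
Qed.

Lemma level_prefix_sums_small N (eps : R) : zero_sums_at i j f -> 0 < eps ->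
  small_tail N eps -> \sum_(m <- words N) cabs (c m) <= eps + eps.
Proof.
move=> zs eps0 tail.
set n0 := size (words N); set d := eps / (n0%:R + 1).
have d0 : 0 < d by rewrite /d divr_gt0 // ltr_wpDl.
have d_n0 : d * (n0%:R + 1) = eps by rewrite /d divfK // gt_eqF // ltr_wpDl.
have [L0 HL0] := eventually_all (words N) (ray_partial_sums_small zs d0).
set L := maxn L0 N.+1.
have c_le m : m \in words N -> cabs (c m) <=
    d + \sum_(N.+1 <= k < L) cabs (F (m ++ nseq (k - N) false)).
  rewrite mem_words => /eqP sm.
  rewrite (@prefix_sum_ray _ L) ?sm ?leq_maxr //.
  apply: le_trans (cabs_subr_le _ _) _; apply: lerD.
    by apply: ltW; apply: HL0; rewrite ?leq_maxl ?mem_words ?sm.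
  exact: cabs_sum.
rewrite big_seq; apply: le_trans (ler_sum _ c_le) _; rewrite -big_seq big_split /=.
rewrite -(big_allpairs_dep (h := fun m k => m ++ nseq (k - N) false) (F := fun w => cabs (F w))).
apply: lerD; last exact: tail (ray_extensions_uniq N L) (@ray_extensions_long N L).
rewrite big_const_seq count_predT iter_addr_0 -/n0 -mulr_natr; nra.
Qed.

End Estimates.

End CuntzAlgebra.

(* h lies in every closed ideal I containing f_0: for e > 0, with eps = e/4
   and N given by a small tail, H_N lies in I and ||h - H_N|| <= 3 eps < e. *)
Theorem proposition3p11 (R : realType) (i j : word) (f : elt -> R[i]) :
  inA f -> zero_sums_at i j f -> J (restrict_Sv i j f).
Proof.
move=> fA zs I I_ideal I_f0.
have [_ _ _ I_closed] := I_ideal.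
apply: I_closed; first exact: inA_restrict_Sv.
move=> e e0.
have e4 : 0 < e / 4 by rewrite divr_gt0.
have [N tail] := exists_small_tail i j fA e4.
exists (approx i j f N); first exact: approx_in_ideal.
rewrite (_ : (fun t => _) = approx_error i j f N); last first.
  by apply/funext => u; rewrite restrict_sub_approx.
apply: le_lt_trans (l1norm_approx_error_le tail (level_prefix_sums_small zs e4 tail)) _.
by rewrite lte_fin; lra.
Qed.
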